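(* Let $m\in\{2,3\}$, and let $S\ni h$ be a polarized lattice with $h^2\ge4$ if $m=2$ and $h^2=8$ if $m=3$, which is $(m-1)$-admissible. Let $\Delta$ be a Weyl chamber for $\operatorname{rt}(S,h)$, $\bar P$ the corresponding closed fundamental polyhedron, and $w\in\bar P$ an $m$-isotropic vector. Then: (1) if $h^2=4$ and $m=2$, there are at most two $2$-isotropic vectors in $\bar P$, and if there are two, $w\ne\bar w$, then $w+\bar w=h$; (2) otherwise, $w$ is the unique $m$-isotropic vector in $\bar P$. Furthermore, $l\cdot w\in\{0,1\}$ for each line $l\in\operatorname{Fn}_\Delta(S,h)$ and $e\cdot w\in\{0,1\}$ for each exceptional divisor $e\in\mathfrak{b}(\Delta)$.
   Context: All lattices even; $(S,h)$ polarized means $S$ hyperbolic, $h^2>0$. $\operatorname{root}_n(S,h)=\{r: r^2=-2,\ r\cdot h=n\}$, $\operatorname{rt}(S,h)$ spanned by $\operatorname{root}_0(S,h)$. A Weyl chamber $\Delta$ has positive roots $P_\Delta$ and simple roots $\mathfrak{b}(\Delta)$ (exceptional divisors). $\bar P=\{v\in S\otimes\mathbb{R}: v^2\ge0,\ v\cdot h\ge0,\ v\cdot r\ge0 \text{ for all } r\in P_\Delta \text{ and all roots } r \text{ with } r\cdot h>0\}$. Lines: $\operatorname{Fn}_\Delta(S,h)=\{l\in\operatorname{root}_1(S,h): l\cdot e\ge0\ \forall e\in\mathfrak{b}(\Delta)\}$. $w$ is $m$-isotropic if $w^2=0$, $w\cdot h=m$. $1$-admissible: no $1$-isotropic vector;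 $2$-admissible: $h^2\ge4$ and no $1$- or $2$-isotropic vector. *)

From HB Require Import structures.
From mathcomp Require Import all_boot all_order all_algebra.
Set Implicit Arguments. Unset Strict Implicit. Unset Printing Implicit Defensive.
Import Order.TTheory GRing.Theory Num.Theory.
Local Open Scope ring_scope.

(* A lattice of rank n is Z^n (row vectors) with an integral Gram matrix G. *)
Definition bf (n : nat) (G : 'M[int]_n) (x y : 'rV[int]_n) : int :=
  (x *m G *m y^T) ord0 ord0.

Definition even_lattice (n : nat) (G : 'M[int]_n) : Prop :=
  G^T = G /\ forall i, (2 %| G i i)%Z.

(* hyperbolic: signature (1, n-1): some positive vector whose orthogonal
   complement is negative definite *)
Definition hyperbolic (n : nat) (G : 'M[int]_n) : Prop :=
  exists v : 'rV[int]_n, 0 < bf G v v /\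
    forall x, bf G x v = 0 -> x != 0 -> bf G x x < 0.

Definition polarized (n : nat) (G : 'M[int]_n) (h : 'rV[int]_n) : Prop :=
  [/\ even_lattice G, hyperbolic G & 0 < bf G h h].

Definition root_n (n : nat) (G : 'M[int]_n) (h : 'rV[int]_n) (k : int)
  (r : 'rV[int]_n) : Prop := bf G r r = -2 /\ bf G r h = k.

(* A Weyl chamber Delta of rt(S,h) is given by a vector delta of S
   (which can be taken in rt(S,h) up to scaling) lying on no wall r^perp,
   r in root_0(S,h).  The chamber is determined by the positive roots. *)
Definition weyl_param (n : nat) (G : 'M[int]_n) (h delta : 'rV[int]_n) : Prop :=
  forall r, root_n G h 0 r -> bf G delta r != 0.

Definition pos_root (n : nat) (G : 'M[int]_n) (h delta r : 'rV[int]_n) : Prop :=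
  root_n G h 0 r /\ 0 < bf G delta r.

(* b(Delta): simple (indecomposable) positive roots = exceptional divisors *)
Definition simple_root (n : nat) (G : 'M[int]_n) (h delta e : 'rV[int]_n) : Prop :=
  pos_root G h delta e /\
  ~ (exists r1 r2, [/\ pos_root G h delta r1, pos_root G h delta r2 & e = r1 + r2]).

Definition in_Pbar (n : nat) (G : 'M[int]_n) (h delta v : 'rV[int]_n) : Prop :=
  [/\ 0 <= bf G v v, 0 <= bf G v h,
      (forall r, pos_root G h delta r -> 0 <= bf G v r) &
      (forall r, bf G r r = -2 -> 0 < bf G r h -> 0 <= bf G v r)].

Definition line (n : nat) (G : 'M[int]_n) (h delta l : 'rV[int]_n) : Prop :=
  root_n G h 1 l /\ forall e, simple_root G h delta e -> 0 <= bf G l e.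

Definition isotropic (n : nat) (G : 'M[int]_n) (h : 'rV[int]_n) (m : int)
  (w : 'rV[int]_n) : Prop := bf G w w = 0 /\ bf G w h = m.

Definition admissible1 (n : nat) (G : 'M[int]_n) (h : 'rV[int]_n) : Prop :=
  ~ (exists w, isotropic G h 1 w).

Definition admissible2 (n : nat) (G : 'M[int]_n) (h : 'rV[int]_n) : Prop :=
  4 <= bf G h h /\ ~ (exists w, isotropic G h 1 w \/ isotropic G h 2 w).

From HB Require Import structures.
From mathcomp Require Import all_boot all_order all_algebra zify ring.
Set Implicit Arguments. Unset Strict Implicit. Unset Printing Implicit Defensive.
Import Order.TTheory GRing.Theory Num.Theory.
Local Open Scope ring_scope.

(* By the Hodge index theorem, two distinct m-isotropic vectors a, b satisfy
   0 < a.b and h^2 (a.b) <= 2 m^2, and a.b = 1 is impossible in P-bar since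
   then a - b is a root of rt(S,h), positive or negative, on which a or b is
   negative.  For m = 2, 3 this leaves a.b = 2, and then a + b - h is 0
   (m = 2, h^2 = 4) while h - a - b is 2-isotropic (m = 3).  The bounds on
   l.w and e.w come from the same Hodge bound applied to w + l, 3w + 2l, and
   to w against its reflection w + (w.e) e. *)

Section BilinearForm.
Variables (n : nat) (G : 'M[int]_n).
Implicit Types x y z : 'rV[int]_n.

Lemma bfDl x y z : bf G (x + y) z = bf G x z + bf G y z.
Proof. by rewrite /bf !mulmxDl mxE. Qed.

Lemma bfDr x y z : bf G z (x + y) = bf G z x + bf G z y.
Proof. by rewrite /bf linearD /= mulmxDr mxE. Qed.

Lemma bfZl (a : int) x z : bf G (a *: x) z = a * bf G x z.
Proof. by rewrite /bf -!scalemxAl mxE. Qed.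

Lemma bfZr (a : int) x z : bf G z (a *: x) = a * bf G z x.
Proof. by rewrite /bf linearZ /= -scalemxAr mxE. Qed.

Lemma bfNl x z : bf G (- x) z = - bf G x z.
Proof. by rewrite -scaleN1r bfZl mulN1r. Qed.

Lemma bfNr x z : bf G z (- x) = - bf G z x.
Proof. by rewrite -scaleN1r bfZr mulN1r. Qed.

Lemma bf0l z : bf G 0 z = 0.
Proof. by rewrite /bf !mul0mx mxE. Qed.

Lemma bfC x y : G^T = G -> bf G x y = bf G y x.
Proof.
move=> GT; rewrite /bf -[x *m G *m y^T]trmxK mxE.
by rewrite !trmx_mul trmxK GT mulmxA.
Qed.

End BilinearForm.

Ltac bf_expand := rewrite ?(bfDl, bfDr, bfNl, bfNr, bfZl, bfZr).

Section Polarized.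
Variables (n : nat) (G : 'M[int]_n) (h : 'rV[int]_n).
Hypotheses (GT : G^T = G) (hypG : hyperbolic G) (hpos : 0 < bf G h h).
Implicit Types (x a b w : 'rV[int]_n) (m : int).

Lemma orth_nonneg_eq0 x : bf G x h = 0 -> 0 <= bf G x x -> x = 0.
Proof.
move=> xh xx; apply/eqP/negPn/negP => x_neq0.
have [v [_ vneg]] := hypG.
(* y is orthogonal to v, where the form is negative definite, yet y^2 >= 0. *)
have xv : bf G x v != 0.
  by apply/eqP => /vneg/(_ x_neq0); rewrite ltNge xx.
pose y := bf G x v *: h - bf G h v *: x.
have yv : bf G y v = 0 by rewrite /y; bf_expand; ring.
have yh : bf G y h = bf G x v * bf G h h by rewrite /y; bf_expand; rewrite xh; ring.
have y_neq0 : y != 0 by apply/eqP => y0; move: yh; rewrite y0 bf0l; nia.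
have yy : bf G y y = bf G x v ^+ 2 * bf G h h + bf G h v ^+ 2 * bf G x x.
  by rewrite /y; bf_expand; rewrite xh (bfC h x) // xh; ring.
have := vneg y yv y_neq0; rewrite yy; nia.
Qed.

Lemma orth_sq_le0 x : bf G x h = 0 -> bf G x x <= 0.
Proof.
move=> xh; case: (lerP 0 (bf G x x)) => [xx | /ltW //].
by rewrite (orth_nonneg_eq0 xh xx) bf0l.
Qed.

Lemma hodge_index x : bf G h h * bf G x x <= bf G x h ^+ 2.
Proof.
pose z := bf G h h *: x - bf G x h *: h.
have zh : bf G z h = 0 by rewrite /z; bf_expand; ring.
have zz : bf G z z = bf G h h * (bf G h h * bf G x x - bf G x h ^+ 2).
  by rewrite /z; bf_expand; rewrite (bfC h x) //; ring.
have := orth_sq_le0 zh; rewrite zz; nia.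
Qed.

Lemma isotropic_dot_gt0 m a b : isotropic G h m a -> isotropic G h m b ->
  a != b -> 0 < bf G a b.
Proof.
move=> [aa ah] [bb bh] a_neq_b; rewrite ltNge; apply: contraNN a_neq_b => ab.
rewrite -subr_eq0; apply/eqP/orth_nonneg_eq0; bf_expand.
  by rewrite ah bh subrr.
by rewrite aa bb (bfC b a) //; lia.
Qed.

Lemma isotropic_dot_bound m a b : isotropic G h m a -> isotropic G h m b ->
  bf G h h * bf G a b <= 2 * m ^+ 2.
Proof.
move=> [aa ah] [bb bh]; have := hodge_index (a + b).
by bf_expand; rewrite aa bb ah bh (bfC b a) //; nia.
Qed.

Lemma root0_pos_or_opp_pos delta r : weyl_param G h delta ->
  root_n G h 0 r -> pos_root G h delta r \/ pos_root G h delta (- r).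
Proof.
move=> W [rr rh]; have := W r (conj rr rh).
case: (ltrgtP 0 (bf G delta r)) => // dr _; [left | right]; first by [].
by split; [split|]; rewrite ?bfNl ?bfNr ?opprK ?rr ?rh ?oppr0 ?oppr_gt0.
Qed.

Lemma Pbar_isotropic_dot_neq1 delta a b : weyl_param G h delta ->
  in_Pbar G h delta a -> in_Pbar G h delta b ->
  bf G a a = 0 -> bf G b b = 0 -> bf G a h = bf G b h -> bf G a b != 1.
Proof.
move=> W [_ _ Pa _] [_ _ Pb _] aa bb abh; apply/eqP => ab.
have ba : bf G b a = 1 by rewrite bfC.
have root_ab : root_n G h 0 (a - b).
  by split; bf_expand; rewrite ?aa ?bb ?ab ?ba ?abh ?subrr.
case: (root0_pos_or_opp_pos W root_ab) => [/Pa | /Pb]; bf_expand.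
  by rewrite aa ab.
by rewrite bb ba.
Qed.

Lemma Pbar_isotropic_dot_gt1 delta m a b : weyl_param G h delta ->
  in_Pbar G h delta a -> in_Pbar G h delta b ->
  isotropic G h m a -> isotropic G h m b -> a != b -> 1 < bf G a b.
Proof.
move=> W Pa Pb Ia Ib a_neq_b.
have ab_gt0 := isotropic_dot_gt0 Ia Ib a_neq_b.
case: Ia Ib => [aa ah] [bb bh].
have := Pbar_isotropic_dot_neq1 W Pa Pb aa bb; rewrite ah bh => /(_ erefl).
lia.
Qed.

Lemma Pbar_isotropic2_unique delta a b : 4 <= bf G h h ->
  weyl_param G h delta -> in_Pbar G h delta a -> in_Pbar G h delta b ->
  isotropic G h 2 a -> isotropic G h 2 b ->
  a = b \/ (bf G h h = 4 /\ a + b = h).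
Proof.
move=> h4 W Pa Pb Ia Ib; case: (eqVneq a b) => [-> | a_neq_b]; first by left.
have ab_gt1 := Pbar_isotropic_dot_gt1 W Pa Pb Ia Ib a_neq_b.
have bound := isotropic_dot_bound Ia Ib.
have [ab hh] : bf G a b = 2 /\ bf G h h = 4 by nia.
case: Ia Ib => [aa ah] [bb bh]; right; split => //.
apply/eqP; rewrite -subr_eq0; apply/eqP/orth_nonneg_eq0; bf_expand.
  by rewrite ah bh hh.
by rewrite (bfC b a) // (bfC h a) // (bfC h b) // aa bb ab ah bh hh.
Qed.

Lemma Pbar_isotropic3_unique delta a b : bf G h h = 8 -> admissible2 G h ->
  weyl_param G h delta -> in_Pbar G h delta a -> in_Pbar G h delta b ->
  isotropic G h 3 a -> isotropic G h 3 b -> a = b.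
Proof.
move=> hh [_ adm] W Pa Pb Ia Ib; apply/eqP/negPn/negP => a_neq_b.
have ab_gt1 := Pbar_isotropic_dot_gt1 W Pa Pb Ia Ib a_neq_b.
have := isotropic_dot_bound Ia Ib; rewrite hh => bound.
have ab : bf G a b = 2 by nia.
case: Ia Ib => [aa ah] [bb bh]; apply: adm; exists (h - a - b); right; split; bf_expand;
  rewrite ?(bfC b a) // ?(bfC h a) // ?(bfC h b) //.
  by rewrite aa bb ab ah bh hh.
by rewrite ah bh hh.
Qed.

Lemma root1_isotropic2_dot_le1 w l : 4 <= bf G h h -> admissible1 G h ->
  isotropic G h 2 w -> root_n G h 1 l -> bf G w l <= 1.
Proof.
move=> h4 adm [ww wh] [ll lh]; rewrite leNgt; apply/negP => wl_gt1.
have := hodge_index (w + l); bf_expand.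
rewrite (bfC l w) // ww ll wh lh => bound.
have [wl hh] : bf G w l = 2 /\ bf G h h = 4 by nia.
apply: adm; exists (h - l - w); split; bf_expand;
  rewrite ?(bfC l w) // ?(bfC h w) // ?(bfC h l) //.
  by rewrite ww ll wh lh wl hh.
by rewrite wh lh hh.
Qed.

Lemma root1_isotropic3_dot_le1 w l : 8 <= bf G h h ->
  isotropic G h 3 w -> root_n G h 1 l -> bf G w l <= 1.
Proof.
move=> h8 [ww wh] [ll lh]; have := hodge_index (3 *: w + 2 *: l).
by bf_expand; rewrite (bfC l w) // ww ll wh lh; nia.
Qed.

Lemma isotropic_reflect m w e : root_n G h 0 e ->
  isotropic G h m w -> isotropic G h m (w + bf G w e *: e).
Proof.
move=> [ee eh] [ww wh]; split; bf_expand; rewrite ?(bfC e w) // ?ww ?ee ?wh ?eh.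
  by ring.
by rewrite mulr0 addr0.
Qed.

Lemma root0_isotropic_dot_le1 m w e : 2 * m ^+ 2 < 4 * bf G h h ->
  isotropic G h m w -> root_n G h 0 e -> bf G w e <= 1.
Proof.
move=> hm Iw Re; have := isotropic_dot_bound Iw (isotropic_reflect Re Iw).
case: Iw => ww _; bf_expand; rewrite ww add0r => bound.
have : bf G w e * bf G w e < 4.
  by rewrite -(ltr_pM2l hpos); apply: le_lt_trans bound _; rewrite [_ * 4]mulrC.
nia.
Qed.

End Polarized.

Theorem lemma2p15 (n : nat) (G : 'M[int]_n) (h delta w : 'rV[int]_n) (m : nat) :
  (m = 2%N \/ m = 3%N) ->
  polarized G h ->
  (m = 2%N -> 4 <= bf G h h) ->
  (m = 3%N -> bf G h h = 8) ->
  (m = 2%N -> admissible1 G h) ->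
  (m = 3%N -> admissible2 G h) ->
  weyl_param G h delta ->
  in_Pbar G h delta w ->
  isotropic G h m%:Z w ->
  [/\ (bf G h h = 4 /\ m = 2%N ->
        (forall a b c,
           isotropic G h 2 a -> in_Pbar G h delta a ->
           isotropic G h 2 b -> in_Pbar G h delta b ->
           isotropic G h 2 c -> in_Pbar G h delta c ->
           [\/ a = b, a = c | b = c]) /\
        (forall w', isotropic G h 2 w' -> in_Pbar G h delta w' ->
           w' != w -> w + w' = h)),
      (~ (bf G h h = 4 /\ m = 2%N) ->
        forall w', isotropic G h m%:Z w' -> in_Pbar G h delta w' -> w' = w),
      (forall l, line G h delta l -> bf G l w = 0 \/ bf G l w = 1) &
      (forall e, simple_root G h delta e -> bf G e w = 0 \/ bf G e w = 1)].
Proof.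
move=> m23 [[GT _] hypG hpos] hh2 hh3 adm1 adm2 W Pw Iw.
have [_ _ Pw_pos Pw_root] := Pw.
have dot01 v : 0 <= bf G w v -> bf G w v <= 1 -> bf G v w = 0 \/ bf G v w = 1.
  by rewrite (bfC v w GT); lia.
split.
- case=> h4 m2; subst m.
  have unique2 a b := @Pbar_isotropic2_unique n G h GT hypG hpos delta a b (hh2 erefl) W.
  split=> [a b c Ia Pa Ib Pb Ic Pc | w' Iw' Pw' /negPf w'_neq_w].
    case: (unique2 _ _ Pa Pb Ia Ib) => [-> | [_ ab]]; first exact: Or31.
    case: (unique2 _ _ Pa Pc Ia Ic) => [-> | [_ ac]]; first exact: Or32.
    by apply: Or33; apply: (addrI a); rewrite ab ac.
  by case: (unique2 _ _ Pw Pw' Iw Iw') => [E | []] //; rewrite E eqxx in w'_neq_w.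
- move=> not_h4_m2 w' Iw' Pw'; case: m23 => m_eq; subst m.
    have [// | [h4 _]] := Pbar_isotropic2_unique GT hypG hpos (hh2 erefl) W Pw' Pw Iw' Iw.
    by case: not_h4_m2.
  exact: (Pbar_isotropic3_unique GT hypG hpos (hh3 erefl) (adm2 erefl) W).
- move=> l [Rl _]; have [ll lh] := Rl.
  apply: dot01; first by apply: Pw_root; rewrite ?ll ?lh.
  case: m23 => m_eq; subst m.
    exact: (root1_isotropic2_dot_le1 GT hypG hpos (hh2 erefl) (adm1 erefl) Iw Rl).
  by apply: (root1_isotropic3_dot_le1 GT hypG hpos _ Iw Rl); rewrite hh3.
- move=> e [Pe _]; have [Re _] := Pe.
  apply: dot01; first exact: Pw_pos Pe.
  apply: (root0_isotropic_dot_le1 GT hypG hpos _ Iw Re).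
  by case: m23 => m_eq; subst m; [have := hh2 erefl | rewrite hh3]; lia.
Qed.
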